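(* Let $\eta\in[0,1]$ and let $\hat n_1,\hat n_2,\hat n_3\in\mathbb{R}^3$ be arbitrary unit vectors. For $k\in\{1,2,3\}$ let $M_k=\{E^k_+,E^k_-\}$ be the qubit POVM with $E^k_{\pm}=\tfrac12 I\pm\tfrac{\eta}{2}\vec\sigma\cdot\hat n_k$, and suppose the three POVMs are pairwise jointly measurable. Then there is no state-independent violation of the LSW inequality: there do not exist pairwise joint measurements $G_{12},G_{23},G_{13}$ (of $\{M_1,M_2\}$, $\{M_2,M_3\}$, $\{M_1,M_3\}$ respectively) such that $$R_3^Q(\rho)\equiv\frac13\sum_{(ij)\in\{(12),(23),(13)\}}\mathrm{Tr}\big(\rho\,(G^{ij}_{+-}+G^{ij}_{-+})\big)>1-\frac{\eta}{3}$$ holds for every qubit density operator $\rho$.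
   Context: $\vec\sigma=(\sigma_x,\sigma_y,\sigma_z)$ is the vector of Pauli matrices and $I$ the $2\times 2$ identity. A pairwise joint measurement of $\{M_i,M_j\}$ is a qubit POVM $G_{ij}=\{G^{ij}_{X_iX_j}\}_{X_i,X_j\in\{+,-\}}$ (so $G^{ij}_{X_iX_j}\ge 0$ and $\sum G^{ij}_{X_iX_j}=I$) satisfying $\sum_{X_j}G^{ij}_{X_iX_j}=E^i_{X_i}$ and $\sum_{X_i}G^{ij}_{X_iX_j}=E^j_{X_j}$. The POVMs are pairwise jointly measurable if such $G_{ij}$ exist for all three pairs. The quantity $R_3^Q(\rho)$ is the average probability of anticorrelated outcomes when one of the three pairs is chosen uniformly at random and jointly measured on $\rho$. *)

From HB Require Import structures.
From mathcomp Require Import all_boot all_order all_algebra.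
From mathcomp Require Import complex.
Set Implicit Arguments. Unset Strict Implicit. Unset Printing Implicit Defensive.
Import Order.TTheory GRing.Theory Num.Theory.
Local Open Scope ring_scope.
Local Open Scope complex_scope.

Section Qubit.
Variable R : rcfType.
Local Notation C := R[i].

Definition adjmx (m n : nat) (A : 'M[C]_(m, n)) : 'M[C]_(n, m) :=
  (map_mx Num.conj A)^T.

(* Positive semidefinite 2x2 operator: <v, A v> >= 0 for all v
   (over C this also forces A to be Hermitian). *)
Definition psd (A : 'M[C]_2) : Prop :=
  forall v : 'cV[C]_2, 0 <= (adjmx v *m A *m v) 0 0.

Definition density (rho : 'M[C]_2) : Prop := psd rho /\ \tr rho = 1.

Definition sigma_x : 'M[C]_2 := \matrix_(i, j) (if i == j then 0 else 1).
Definition sigma_y : 'M[C]_2 :=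
  \matrix_(i, j) (if i == j then 0 else if (i : nat) == 0%N then - 'i else 'i).
Definition sigma_z : 'M[C]_2 :=
  \matrix_(i, j) (if i == j then (if (i : nat) == 0%N then 1 else -1) else 0).

Definition sigma_dot (n : 'rV[R]_3) : 'M[C]_2 :=
  (n 0 0)%:C *: sigma_x + (n 0 1)%:C *: sigma_y + (n 0 2)%:C *: sigma_z.

Definition unit_vec (n : 'rV[R]_3) : Prop := \sum_(k < 3) n 0 k ^+ 2 = 1.

Definition Eeff (eta : R) (n : 'rV[R]_3) (s : bool) : 'M[C]_2 :=
  (1 / 2)%:M + ((if s then 1 else -1) * eta / 2)%:C *: sigma_dot n.

Definition joint_meas (Ea Eb : bool -> 'M[C]_2) (G : bool -> bool -> 'M[C]_2)
  : Prop :=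
  (forall a b, psd (G a b)) /\
  \sum_(a : bool) \sum_(b : bool) G a b = 1%:M /\
  (forall a, \sum_(b : bool) G a b = Ea a) /\
  (forall b, \sum_(a : bool) G a b = Eb b).

Definition jointly_measurable (Ea Eb : bool -> 'M[C]_2) : Prop :=
  exists G, joint_meas Ea Eb G.

Definition anticorr (rho : 'M[C]_2) (G : bool -> bool -> 'M[C]_2) : C :=
  \tr (rho *m (G true false + G false true)).

Definition R3Q (rho : 'M[C]_2) (G12 G23 G13 : bool -> bool -> 'M[C]_2) : C :=
  (anticorr rho G12 + anticorr rho G23 + anticorr rho G13) / 3.

End Qubit.

(* Let rho be the pure state polarised along -n2, i.e. the projector onto an
   eigenvector of sigma.n2 for the eigenvalue -1.  Since the marginals of a
   joint measurement G are E^i_s = G_{s+} + G_{s-} and E^j_s = G_{+s} + G_{-s},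
   for either sign s
     Tr rho (G_{+-} + G_{-+}) = Tr rho E^i_s + Tr rho E^j_s - 2 Tr rho G_{ss}
                              <= Tr rho E^i_s + Tr rho E^j_s.
   Taking s = + for the pairs (12), (23) and s = - for (13), the effects of
   M_1 and of M_3 add up to the identity, and M_2 contributes
   2 Tr rho E^2_+ = 1 - eta; hence 3 R_3^Q(rho) <= 3 - eta. *)

From mathcomp Require Import all_boot all_order all_algebra.
From mathcomp Require Import complex ring.
Set Implicit Arguments. Unset Strict Implicit. Unset Printing Implicit Defensive.
Import Order.TTheory GRing.Theory Num.Theory.
Local Open Scope ring_scope.
Local Open Scope complex_scope.

Section Qubit.
Variable R : rcfType.
Local Notation C := R[i].

Lemma big_ord2 (F : 'I_2 -> C) : \sum_(i < 2) F i = F 0 + F 1.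
Proof. by rewrite big_ord_recl big_ord1; congr (_ + F _); apply: val_inj. Qed.

Lemma adjmx_mul m n p (A : 'M[C]_(m, n)) (B : 'M[C]_(n, p)) :
  adjmx (A *m B) = adjmx B *m adjmx A.
Proof. by rewrite /adjmx map_mxM trmx_mul. Qed.

Lemma adjmxK m n (A : 'M[C]_(m, n)) : adjmx (adjmx A) = A.
Proof. by apply/matrixP => i j; rewrite !mxE conjCK. Qed.

Lemma adjmx_mul_self n (w : 'cV[C]_n) :
  (adjmx w *m w) 0 0 = \sum_i (w i 0)^* * w i 0.
Proof. by rewrite !mxE; apply: eq_bigr => i _; rewrite !mxE. Qed.

Lemma adjmx_mul_self_ge0 n (w : 'cV[C]_n) : 0 <= (adjmx w *m w) 0 0.
Proof.
by rewrite adjmx_mul_self sumr_ge0 // => i _; rewrite mulrC mul_conjC_ge0.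
Qed.

Lemma adjmx_mul_self_gt0 n (w : 'cV[C]_n) : w != 0 -> 0 < (adjmx w *m w) 0 0.
Proof.
move=> w_neq0; rewrite lt_def adjmx_mul_self_ge0 andbT adjmx_mul_self.
apply: contra w_neq0 => /eqP/psumr_eq0P w_eq0; apply/eqP/matrixP => i j.
rewrite ord1 mxE; apply/eqP; rewrite -mul_conjC_eq0 mulrC w_eq0 //.
by move=> k _; rewrite mulrC mul_conjC_ge0.
Qed.

Lemma psd_scaled_outer (w : 'cV[C]_2) (c : C) :
  0 <= c -> psd (c *: (w *m adjmx w)).
Proof.
move=> c_ge0 v; set u := adjmx w *m v.
have -> : adjmx v *m (c *: (w *m adjmx w)) *m v = c *: (adjmx u *m u).
  by rewrite adjmx_mul adjmxK -scalemxAr -scalemxAl !mulmxA.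
by rewrite mxE mulr_ge0 // adjmx_mul_self_ge0.
Qed.

Lemma mxtrace_outer_mul n (w : 'cV[C]_n) (A : 'M[C]_n) :
  \tr (w *m adjmx w *m A) = (adjmx w *m A *m w) 0 0.
Proof. by rewrite -mulmxA mxtrace_mulC trace_mx11. Qed.

Lemma unit_vecE (n : 'rV[R]_3) :
  unit_vec n -> (n 0 0)%:C ^+ 2 + (n 0 1)%:C ^+ 2 + (n 0 2)%:C ^+ 2 = 1 :> C.
Proof.
rewrite -!rmorphXn -!rmorphD -(rmorph1 (real_complex R)) /unit_vec.
rewrite !big_ord_recr big_ord0 /= add0r => <-.
by congr (n 0 _ ^+ 2 + n 0 _ ^+ 2 + n 0 _ ^+ 2)%:C; apply: val_inj.
Qed.

Lemma ord2P (i : 'I_2) : i = 0 \/ i = 1.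
Proof. by case: i => -[|[|//]] ?; [left|right]; apply: val_inj. Qed.

Lemma sigma_dot_entries (n : 'rV[R]_3) :
  let x := (n 0 0)%:C in let y := (n 0 1)%:C in let z := (n 0 2)%:C in
  [/\ sigma_dot n 0 0 = z, sigma_dot n 0 1 = x - 'i * y,
      sigma_dot n 1 0 = x + 'i * y & sigma_dot n 1 1 = - z].
Proof.
by split; rewrite !mxE /= ?mulr0 ?mulr1 ?mulrN1 ?add0r ?addr0 ?mulrN
  ?(mulrC (n 0 1)%:C).
Qed.

Lemma mxtrace_sigma_dot (n : 'rV[R]_3) : \tr (sigma_dot n) = 0.
Proof.
rewrite /mxtrace big_ord2.
by case: (sigma_dot_entries n) => -> _ _ ->; rewrite subrr.
Qed.

Lemma sigma_dot_sqr (n : 'rV[R]_3) :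
  unit_vec n -> sigma_dot n *m sigma_dot n = 1%:M.
Proof.
move/unit_vecE; case: (sigma_dot_entries n).
set x := (n 0 0)%:C; set y := (n 0 1)%:C; set z := (n 0 2)%:C.
set S := sigma_dot n; clearbody S => S00 S01 S10 S11 n_unit.
have xy : (x - 'i * y) * (x + 'i * y) = x ^+ 2 + y ^+ 2.
  by rewrite -subr_sqr exprMn sqr_i mulN1r opprK.
apply/matrixP => i j; rewrite !mxE big_ord2.
have [-> | ->] := ord2P i; have [-> | ->] := ord2P j;
  rewrite ?S00 ?S01 ?S10 ?S11 /=.
all: by rewrite -?n_unit -?xy; ring.
Qed.

Lemma sigma_dot_eigenvector (n : 'rV[R]_3) :
  unit_vec n -> exists2 w : 'cV[C]_2, w != 0 & sigma_dot n *m w = - w.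
Proof.
(* As (sigma.n)^2 = 1, the columns of sigma.n - 1 are eigenvectors for -1,
   and they are not all zero because the trace of sigma.n - 1 is -2. *)
move=> n_unit; set M : 'M[C]_2 := sigma_dot n - 1%:M.
have SM : sigma_dot n *m M = - M.
  by rewrite mulmxBr sigma_dot_sqr // mulmx1 opprB.
have M_neq0 : M != 0.
  apply/eqP => /(congr1 mxtrace).
  rewrite linearB /= mxtrace_sigma_dot mxtrace1 mxtrace0.
  by move/eqP; rewrite sub0r oppr_eq0 pnatr_eq0.
have /existsP [j Mj_neq0] : [exists j, col j M != 0].
  apply: contraR M_neq0 => /existsPn M_col0; apply/eqP/matrixP => i j.
  by have /negPn/eqP/matrixP/(_ i 0) := M_col0 j; rewrite !mxE.
by exists (col j M) => //; rewrite !colE mulmxA SM mulNmx.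
Qed.

Lemma spin_down_state (n : 'rV[R]_3) : unit_vec n ->
  exists rho : 'M[C]_2, [/\ density rho,
    forall A, psd A -> 0 <= \tr (rho *m A) & \tr (rho *m sigma_dot n) = -1].
Proof.
case/sigma_dot_eigenvector => w w_neq0 Sw.
have ww_gt0 := adjmx_mul_self_gt0 w_neq0.
set c := ((adjmx w *m w) 0 0)^-1.
have c_ge0 : 0 <= c by rewrite invr_ge0 ltW.
have trE A : \tr (c *: (w *m adjmx w) *m A) = c * (adjmx w *m A *m w) 0 0.
  by rewrite -scalemxAl mxtraceZ mxtrace_outer_mul.
exists (c *: (w *m adjmx w)); split.
- split; first exact: psd_scaled_outer.
  by have := trE 1%:M; rewrite !mulmx1 => ->; rewrite mulVf ?lt0r_neq0.
- by move=> A A_psd; rewrite trE mulr_ge0.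
- by rewrite trE -mulmxA Sw mulmxN mxE mulrN mulVf ?lt0r_neq0.
Qed.

Lemma Eeff_sum (eta : R) (n : 'rV[R]_3) :
  Eeff eta n true + Eeff eta n false = 1%:M.
Proof.
rewrite /Eeff !mul1r mulN1r mulNr rmorphN scaleNr addrACA subrr addr0.
by rewrite -raddfD /=; congr _%:M; field.
Qed.

Lemma anticorr_le (rho : 'M[C]_2) Ea Eb G (s : bool) :
  (forall A, psd A -> 0 <= \tr (rho *m A)) -> joint_meas Ea Eb G ->
  anticorr rho G <= \tr (rho *m Ea s) + \tr (rho *m Eb s).
Proof.
move=> rho_pos [G_psd [_ [<- <-]]].
rewrite /anticorr !big_bool !mulmxDr !linearD /=.
case: s (rho_pos _ (G_psd s s)) => Gss_ge0.
- by apply: lerD; apply: ler_wpDl.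
- by rewrite addrC; apply: lerD; apply: ler_wpDr.
Qed.

Lemma R3Q_le (eta : R) (n1 n2 n3 : 'rV[R]_3) (rho : 'M[C]_2) G12 G23 G13 :
  (forall A, psd A -> 0 <= \tr (rho *m A)) -> \tr rho = 1 ->
  \tr (rho *m sigma_dot n2) = -1 ->
  joint_meas (Eeff eta n1) (Eeff eta n2) G12 ->
  joint_meas (Eeff eta n2) (Eeff eta n3) G23 ->
  joint_meas (Eeff eta n1) (Eeff eta n3) G13 ->
  R3Q rho G12 G23 G13 <= (1 - eta / 3)%:C.
Proof.
move=> rho_pos tr_rho tr_rho_S j12 j23 j13.
have tr_pair n :
    \tr (rho *m Eeff eta n true) + \tr (rho *m Eeff eta n false) = 1.
  by rewrite -linearD -mulmxDr Eeff_sum mulmx1.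
have tr_E2 : \tr (rho *m Eeff eta n2 true) = (1 - eta%:C) / 2.
  rewrite /Eeff mulmxDr linearD /= mul_mx_scalar -scalemxAr !linearZ /=.
  by rewrite tr_rho tr_rho_S mul1r rmorphM fmorphV /= rmorph_nat; field.
have average_le (A a a' b c c' : C) : A <= a + b + (b + c) + (a' + c') ->
    a + a' = 1 -> c + c' = 1 -> b = (1 - eta%:C) / 2 ->
    A / 3 <= (1 - eta / 3)%:C.
  move=> A_le pair_a pair_c b_E.
  rewrite rmorphB rmorph1 rmorphM fmorphV /= rmorph_nat.
  have -> : 1 - eta%:C / 3 = (a + b + (b + c) + (a' + c')) / 3.
    rewrite (_ : a + b + _ + _ = (a + a') + (c + c') + b *+ 2); last by ring.
    by rewrite pair_a pair_c b_E; field.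
  by rewrite ler_pM2r ?invr_gt0 ?ltr0n.
rewrite /R3Q; apply: average_le (tr_pair n1) (tr_pair n3) tr_E2.
exact: lerD (lerD (anticorr_le true rho_pos j12)
  (anticorr_le true rho_pos j23)) (anticorr_le false rho_pos j13).
Qed.

End Qubit.

Theorem mainTheorem1 (R : rcfType) (eta : R) (n1 n2 n3 : 'rV[R]_3) :
  0 <= eta <= 1 ->
  unit_vec n1 -> unit_vec n2 -> unit_vec n3 ->
  jointly_measurable (Eeff eta n1) (Eeff eta n2) ->
  jointly_measurable (Eeff eta n2) (Eeff eta n3) ->
  jointly_measurable (Eeff eta n1) (Eeff eta n3) ->
  ~ (exists G12 G23 G13 : bool -> bool -> 'M[R[i]]_2,
       [/\ joint_meas (Eeff eta n1) (Eeff eta n2) G12,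
           joint_meas (Eeff eta n2) (Eeff eta n3) G23,
           joint_meas (Eeff eta n1) (Eeff eta n3) G13 &
           forall rho : 'M[R[i]]_2, density rho ->
             (1 - eta / 3)%:C < R3Q rho G12 G23 G13]).
Proof.
move=> _ _ n2_unit _ _ _ _ [G12 [G23 [G13 [j12 j23 j13 R3Q_gt]]]].
have [rho [rho_density rho_pos tr_rho_S]] := spin_down_state n2_unit.
have R3Q_bound := R3Q_le rho_pos (proj2 rho_density) tr_rho_S j12 j23 j13.
by have := lt_le_trans (R3Q_gt rho rho_density) R3Q_bound; rewrite ltxx.
Qed.
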